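(* Let $d\geq 3$ and $n\geq 6$ be integers, and let $r$ be an integer. If $r<d+n$, then a general form of degree $d$ in $n+1$ variables has no apolar star configuration $\mathbb{X}(r)\subset\mathbb{P}^n$. If $r\geq d+n$, then a general form of degree $d$ in $n+1$ variables has an apolar star configuration $\mathbb{X}(r)$.
   Context: Let $S=\mathbb{C}[x_0,\dots,x_n]$ and $T=\mathbb{C}[y_0,\dots,y_n]$, where $T$ acts on $S$ by differentiation, $y_j=\partial/\partial x_j$. For a form $F\in S$, $F^\perp=\{\partial\in T:\partial F=0\}$. A finite set of points $\mathbb{X}\subset\mathbb{P}^n=\mathbb{P}(S_1)$ with defining ideal $I(\mathbb{X})\subseteq T$ is apolar to $F$ if $I(\mathbb{X})\subseteq F^\perp$. A star configuration $\mathbb{X}(r)\subset\mathbb{P}^n$: take $r$ linear forms $l_1,\dots,l_r\in T_1$ such that any $n+1$ of them are linearly independent; $\mathbb{X}(r)$ is the set of $\binom{r}{n}$ points obtained by intersecting the hyperplanes $\{l_i=0\}$ $n$ at a time in all possible ways. ''A general form has (resp. has no) apolar $\mathbb{X}(r)$'' means that all forms in some nonempty Zariski open subset of degree $d$ forms have (resp. have no) apolar star configuration $\mathbb{X}(r)$. *)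

From HB Require Import structures.
From mathcomp Require Import all_boot all_order all_algebra.
From mathcomp Require Import reals complex.
From mathcomp Require Import mpoly.

Set Implicit Arguments.
Unset Strict Implicit.
Unset Printing Implicit Defensive.

Import Order.TTheory GRing.Theory Num.Theory.
Local Open Scope ring_scope.

(* Both S = C[x_0..x_n] and T = C[y_0..y_n] are modelled by {mpoly C[n.+1]};
   the variable index i : 'I_n.+1 stands for x_i (in S) resp. y_i (in T). *)

Section Apolarity.
Variable (C : fieldType) (n : nat).

(* Action of T on S by differentiation: y_j acts as d/dx_j, so the monomial
   y^m acts as the iterated partial derivative d^m/dx^m, extended linearly. *)
Definition diff_act (D F : {mpoly C[n]}) : {mpoly C[n]} :=
  \sum_(m <- msupp D) D@_m *: F^`M[m].

Definition perp (F : {mpoly C[n]}) : {mpoly C[n]} -> Prop :=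
  fun D => diff_act D F = 0.

(* A point of P^n = P(S_1) is represented by a nonzero coordinate vector
   v : 'I_n -> C (the linear form sum_j v_j x_j); a set of points by a set
   of such representatives. *)
Definition vanishing_ideal (X : ('I_n -> C) -> Prop) : {mpoly C[n]} -> Prop :=
  fun D => forall (e : nat) (v : 'I_n -> C), X v -> (pihomog mdeg e D).@[v] = 0.

Definition apolar (X : ('I_n -> C) -> Prop) (F : {mpoly C[n]}) : Prop :=
  forall D, vanishing_ideal X D -> perp F D.

End Apolarity.

Section Star.
Variable (C : fieldType).

(* The r linear forms l_1..l_r in T_1 are
   the rows of L (l_i(v) = sum_j L i j * v j); any n+1 of them are linearly
   independent (this presupposes r >= n+1).  For every n-subset S of the
   forms, pt S is (a representative of) the point where the hyperplanes
   {l_i = 0}, i in S, meet; X is the set of these binom(r,n) points. *)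
Definition star_config (n r : nat) (X : ('I_n.+1 -> C) -> Prop) : Prop :=
  exists L : 'M[C]_(r, n.+1),
    (n.+1 <= r)%N /\
    (forall f : 'I_n.+1 -> 'I_r, injective f -> row_free (rowsub f L)) /\
    exists pt : {set 'I_r} -> 'I_n.+1 -> C,
      (forall S : {set 'I_r}, #|S| = n ->
         (exists j, pt S j != 0) /\
         (forall i, i \in S -> \sum_j L i j * pt S j = 0)) /\
      (forall v, X v <-> exists2 S : {set 'I_r}, #|S| = n & v = pt S).

Definition has_apolar_star (n r : nat) (F : {mpoly C[n.+1]}) : Prop :=
  exists X, @star_config n r X /\ apolar X F.

Definition deg_monomials (n d : nat) : seq 'X_{1..n} :=
  map val (enum [pred m : 'X_{1..n < d.+1} | mdeg (val m) == d]).

(* "A general form of degree d in n+1 variables has property P": all forms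
   in some nonempty Zariski open subset of the space of degree d forms have P.
   The space of degree d forms is identified with C^N, N = binom(d+n,d), via
   the coefficients on the monomials of degree d (enumerated by deg_monomials);
   a nonempty Zariski open set contains a nonempty basic open set
   { G <> 0 } with G a nonzero polynomial in the N coordinates. *)
Definition general_form (n d : nat) (P : {mpoly C[n.+1]} -> Prop) : Prop :=
  exists G : {mpoly C[size (deg_monomials n.+1 d)]}, G != 0 /\
    forall F : {mpoly C[n.+1]}, F \is d.-homog ->
      G.@[fun i => F@_(nth 0%MM (deg_monomials n.+1 d) i)] != 0 -> P F.

End Star.

Arguments star_config {C} n r X.
Arguments has_apolar_star {C} n r F.
Arguments general_form {C} n d P.

From HB Require Import structures.
From mathcomp Require Import all_boot all_order all_algebra.
From mathcomp Require Import reals complex.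
From mathcomp Require Import mpoly.
From mathcomp Require Import zify.

(* For [r < d + n]: the point of [X(r)] cut out by an [n]-subset [S] of the linear
   forms is, up to scaling, the generalized cross product of the rows in [S], so by
   the apolarity lemma a form with an apolar [X(r)] is a combination of [d]-th powers
   of these cross products.  Normalizing one entry of the matrix of linear forms to
   [1], such forms are the image of a polynomial map in [r (n + 1) - 1 + binom(r, n)]
   parameters, fewer than the [binom(d + n, d)] coefficients of a form, hence their
   coefficients satisfy a nonzero polynomial relation.
   For [r >= d + n]: take [l_i = sum_j i^j y_j]; the point for [S] is the coefficient
   vector of [prod_(i in S) (t - i)].  A form of degree [e <= r - n] vanishing at all
   of these points vanishes on the coefficients of every monic polynomial of degree
   [n] (freeing the roots one at a time), hence is zero.  So [I(X(r))] has no elements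
   of degree [<= d], while its elements of larger degree annihilate any form of
   degree [d]. *)

Set Implicit Arguments.
Unset Strict Implicit.
Unset Printing Implicit Defensive.

Import Order.TTheory GRing.Theory Num.Theory.
Local Open Scope ring_scope.

Lemma poly_roots_eq0 (R : idomainType) (p : {poly R}) (rs : seq R) :
  uniq rs -> all (root p) rs -> (size p <= size rs)%N -> p = 0.
Proof.
move=> uniq_rs roots_rs; apply: contraTeq => p_neq0.
by rewrite -ltnNge max_poly_roots.
Qed.

Lemma poly_natr_roots_eq0 (R : numDomainType) (q : {poly R}) K :
  (size q <= K)%N -> (forall i, (i < K)%N -> q.[i%:R] = 0) -> q = 0.
Proof.
move=> size_q q_roots; apply: (@poly_roots_eq0 _ _ [seq i%:R | i <- iota 0 K]).
- by rewrite map_inj_uniq ?iota_uniq // => i j /eqP; rewrite eqr_nat => /eqP.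
- by apply/allP => x; case/mapP => i; rewrite mem_iota => /andP[_ lt_iK] ->; apply/eqP/q_roots.
- by rewrite size_map size_iota.
Qed.

Lemma mnm_le_mdeg n (m : 'X_{1..n}) i : (m i <= mdeg m)%N.
Proof. by rewrite mdegE (bigD1 i) //= leq_addr. Qed.

Section MpolyLastVariable.
Variables (R : comNzRingType) (n : nat).

Definition mnm_init (m : 'X_{1..n.+1}) : 'X_{1..n} := [multinom m (lift ord_max i) | i < n].

Definition mslice (p : {mpoly R[n.+1]}) (k : nat) : {mpoly R[n]} :=
  \sum_(m <- msupp p | m ord_max == k) p@_m *: 'X_[mnm_init m].

Lemma mnm_init_inj (m1 m2 : 'X_{1..n.+1}) :
  m1 ord_max = m2 ord_max -> mnm_init m1 = mnm_init m2 -> m1 = m2.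
Proof.
move=> eq_max /mnmP eq_init; apply/mnmP => i.
by have [j ->|->] := unliftP ord_max i; rewrite // -!(mnmE (fun j => _ (lift _ j))) eq_init.
Qed.

Lemma mcoeff_mslice (p : {mpoly R[n.+1]}) m : (mslice p (m ord_max))@_(mnm_init m) = p@_m.
Proof.
rewrite /mslice raddf_sum /=; under eq_bigr do rewrite mcoeffZ mcoeffX.
have other m' : m' != m -> m' ord_max = m ord_max ->
    p@_m' * (mnm_init m' == mnm_init m)%:R = 0.
  move=> ne_m' eq_max; case: eqP => [/(mnm_init_inj eq_max)/eqP|]; last by rewrite mulr0.
  by rewrite (negbTE ne_m').
have [m_p|m_Np] := boolP (m \in msupp p).
  rewrite big_mkcond (bigD1_seq m) ?msupp_uniq //= !eqxx mulr1 big1 ?addr0 // => m' ne_m'.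
  by case: eqP => // /other; apply.
rewrite (memN_msupp_eq0 m_Np) big_seq_cond big1 // => m' /andP[m'_p /eqP eq_max].
by apply: other eq_max; apply: contraNneq m_Np => <-.
Qed.

Lemma meval_mslice (p : {mpoly R[n.+1]}) (v : 'I_n.+1 -> R) K : (msize p <= K)%N ->
  p.@[v] = \sum_(k < K) (mslice p k).@[fun i => v (lift ord_max i)] * v ord_max ^+ k.
Proof.
move=> size_p; rewrite mevalE.
under [RHS]eq_bigr => k _.
  rewrite /mslice raddf_sum mulr_suml /= big_mkcond /=.
  under eq_bigr => m _ do rewrite mevalZ mevalX -mulrA.
  over.
rewrite exchange_big /=; apply: eq_big_seq => m m_p.
have lt_m_K : (m ord_max < K)%N.
  by apply: leq_ltn_trans (mnm_le_mdeg _ _) (leq_trans (msize_mdeg_lt m_p) size_p).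
rewrite [RHS](bigD1 (Ordinal lt_m_K)) //= eqxx [X in _ + X]big1 ?addr0 => [|k ne_k]; last first.
  by rewrite eq_sym -(inj_eq val_inj) /= in ne_k; rewrite (negbTE ne_k).
congr (_ * _); rewrite big_ord_recr /=; congr (_ * _); apply: eq_bigr => i _.
by rewrite mnmE; congr (v _ ^+ m _); apply/val_inj; rewrite /= /bump leqNgt ltn_ord.
Qed.

End MpolyLastVariable.

(* The slices of [p] along the last variable are the coefficients of a univariate
   polynomial vanishing at every natural number. *)
Lemma meval_eq0 (R : numDomainType) n (p : {mpoly R[n]}) : (forall v, p.@[v] = 0) -> p = 0.
Proof.
elim: n p => [|n IHn] p p_eq0.
  by have := p_eq0 (fun _ => 0); rewrite (nvar0_mpolyC p) mevalC => ->.
apply/mpolyP => m; rewrite mcoeff0 -mcoeff_mslice.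
suff -> : mslice p (m ord_max) = 0 by rewrite mcoeff0.
apply: IHn => v; pose ext (t : R) i := if unlift ord_max i is Some j then v j else t.
pose q := \poly_(k < msize p) (mslice p k).@[v].
have q_eq0 : q = 0.
  apply: (@poly_natr_roots_eq0 _ q (msize p)); first exact: size_poly.
  move=> i _; rewrite horner_poly -[RHS](p_eq0 (ext i%:R)) (meval_mslice _ (leqnn _)).
  apply: eq_bigr => k _; congr (_ * _); last by rewrite /ext unlift_none.
  by apply: meval_eq => j; rewrite /ext liftK.
have [lt_m_p|] := ltnP (m ord_max) (msize p).
  by have := congr1 (coefp (m ord_max)) q_eq0; rewrite /= coef_poly lt_m_p coef0.
move=> le_p_m; rewrite -[mslice _ _]/(\sum_(_ <- _ | _) _) big_seq_cond big1 ?meval0 //.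
move=> m' /andP[m'_p /eqP eq_max]; exfalso; move: (msize_mdeg_lt m'_p).
by rewrite ltnNge (leq_trans le_p_m) // -eq_max mnm_le_mdeg.
Qed.

Lemma mcoeff_pihomog (R : nzRingType) n (p : {mpoly R[n]}) m :
  (pihomog mdeg (mdeg m) p)@_m = p@_m.
Proof.
rewrite pihomogE raddf_sum /= big_mkcond /=.
under eq_bigr => m' _ do rewrite mcoeffZ mcoeffX.
have other m' : m' != m -> (if mdeg m' == mdeg m then p@_m' * (m' == m)%:R else 0) = 0.
  by move=> /negbTE ne_m'; rewrite ne_m' mulr0 if_same.
have [m_p|m_Np] := boolP (m \in msupp p).
  by rewrite (bigD1_seq m) ?msupp_uniq //= !eqxx mulr1 big1 ?addr0.
rewrite (memN_msupp_eq0 m_Np) big_seq big1 // => m' m'_p; apply: other.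
by apply: contraNneq m_Np => <-.
Qed.

Lemma mderivm_homog_eq0 (R : nzRingType) n (F : {mpoly R[n]}) d m :
  F \is d.-homog -> (d < mdeg m)%N -> F^`M[m] = 0.
Proof.
move=> F_homog lt_dm; apply/mpolyP => m'; rewrite mcoeff_mderivm mcoeff0.
rewrite (dhomog_nemf_coeff F_homog) ?mul0rn //; apply: contraTneq lt_dm => <-.
by rewrite -leqNgt; apply: leq_trans (leq_addr (mdeg m') _) (eq_leq (esym (mdegD m m'))).
Qed.

Section MpolyRestriction.
Variable R : comNzRingType.

Lemma meval_homog_scale n (Q : {mpoly R[n]}) e c v :
  Q \is e.-homog -> Q.@[fun j => c * v j] = c ^+ e * Q.@[v].
Proof.
move=> Q_homog; rewrite !mevalE mulr_sumr; apply: eq_big_seq => m m_Q.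
under eq_bigr do rewrite exprMn.
by rewrite big_split /= prodrXr -mdegE (dhomog_mf Q_homog m_Q) mulrCA.
Qed.

Lemma meval_line_poly n (Q : {mpoly R[n]}) e (u w : 'I_n -> R) : (msize Q <= e.+1)%N ->
  exists2 lp : {poly R}, (size lp <= e.+1)%N & forall t, lp.[t] = Q.@[fun j => u j + w j * t].
Proof.
move=> size_Q; pose lin j := (w j)%:P * 'X + (u j)%:P.
exists (\sum_(m <- msupp Q) Q@_m *: \prod_j lin j ^+ m j); last first.
  move=> t; rewrite horner_sum mevalE; apply: eq_bigr => m _.
  rewrite hornerZ horner_prod; congr (_ * _); apply: eq_bigr => j _.
  by rewrite horner_exp hornerMXaddC hornerC addrC mulrC.
rewrite (leq_trans (size_sum _ _ _)) //; apply/bigmax_leqP_seq => m m_Q _.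
rewrite (leq_trans (size_scale_leq _ _)) // (leq_trans _ (leq_trans (msize_mdeg_lt m_Q) size_Q)) //.
rewrite mdegE.
apply: (big_ind2 (fun (p : {poly R}) k => size p <= k.+1)%N) => [|p a q b size_p size_q|j _].
- by rewrite size_poly1.
- by have := size_polyMleq p q; lia.
have size_lin : (size (lin j) <= 2)%N.
  by rewrite /lin size_MXaddC; case: ifP => // _; rewrite !ltnS size_polyC leq_b1.
by have := size_poly_exp_leq (lin j) (m j); nia.
Qed.

End MpolyRestriction.

Section AlgebraicDependence.
Variable F : fieldType.

Lemma tall_mx_left_kernel m k (A : 'M[F]_(m, k)) :
  (k < m)%N -> exists2 c : 'rV_m, c != 0 & c *m A = 0.
Proof.
move=> lt_km; exists (nz_row (kermx A)); last exact/sub_kermxP/nz_row_sub.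
rewrite nz_row_eq0 kermx_eq0; apply: contraTN lt_km => /eqP rkA.
by rewrite -leqNgt -rkA rank_leq_col.
Qed.

Lemma mpoly_lin_dep k T (I : finType) (Q : I -> {mpoly F[k]}) :
  (T ^ k < #|I|)%N -> (forall i m j, m \in msupp (Q i) -> m j < T)%N ->
  exists2 c : I -> F, (exists i, c i != 0) & \sum_i c i *: Q i = 0.
Proof.
move=> card_I Q_lt.
pose mB (b : {ffun 'I_k -> 'I_T}) : 'X_{1..k} := [multinom (b j : nat) | j < k].
pose M := \matrix_(x < #|I|, y < #|{ffun 'I_k -> 'I_T}|) (Q (enum_val x))@_(mB (enum_val y)).
have [c c_neq0 cM] : exists2 c : 'rV_#|I|, c != 0 & c *m M = 0.
  by apply: tall_mx_left_kernel; rewrite card_ffun !card_ord.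
exists (fun i => c 0 (enum_rank i)).
  have [x cx] : exists x, c 0 x != 0.
    apply/existsP; apply: contraNT c_neq0 => /existsPn c0.
    by apply/eqP/rowP => x; rewrite mxE; apply/eqP/negPn.
  by exists (enum_val x); rewrite enum_valK.
apply/mpolyP => m; rewrite mcoeff0 raddf_sum /=; under eq_bigr do rewrite mcoeffZ.
have [m_lt|] := boolP [forall j, m j < T]%N; last first.
  rewrite negb_forall => /existsP[j]; rewrite -leqNgt => le_T_m.
  apply: big1 => i _; rewrite memN_msupp_eq0 ?mulr0 //.
  by apply: contraL le_T_m => /(Q_lt _ _ j); rewrite -ltnNge.
pose b : {ffun 'I_k -> 'I_T} := [ffun j => Ordinal (forallP m_lt j)].
have -> : m = mB b by apply/mnmP => j; rewrite mnmE ffunE.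
have := congr1 (fun u : 'rV_ _ => u 0 (enum_rank b)) cM; rewrite !mxE => cMb.
rewrite -[RHS]cMb (reindex (fun x : 'I_#|I| => enum_val x)) /=; last exact/onW_bij/enum_val_bij.
by apply: eq_bigr => x _; rewrite enum_valK mxE enum_rankK.
Qed.

Lemma mdeg_msupp_prodX n N (P : 'I_N -> {mpoly F[n]}) (a : 'I_N -> nat) D :
  (forall i, {in msupp (P i), forall m, mdeg m <= D})%N ->
  {in msupp (\prod_i P i ^+ a i), forall m, mdeg m <= \sum_i a i * D}%N.
Proof.
move=> P_le.
pose bounded (p : {mpoly F[n]}) e := {in msupp p, forall m, mdeg m <= e}%N.
have bounded1 : bounded 1 0 by move=> m; rewrite msupp1 inE => /eqP ->; rewrite mdeg0.
have boundedM p e q f : bounded p e -> bounded q f -> bounded (p * q) (e + f).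
  move=> p_le q_le m /msuppM_le /allpairsP[[m1 m2] [/= m1_p m2_q ->]].
  by rewrite mdegD leq_add ?p_le ?q_le.
apply: (big_ind2 bounded) => // i _.
elim: (a i) => [|e IHe]; first by rewrite expr0 mul0n.
by rewrite exprS mulSn; apply: boundedM (P_le i) IHe.
Qed.

Lemma mpoly_alg_dep k N (P : 'I_N -> {mpoly F[k]}) : (k < N)%N ->
  exists2 G : {mpoly F[N]}, G != 0 & forall x, G.@[fun i => (P i).@[x]] = 0.
Proof.
move=> lt_kN; pose d := \max_i msize (P i).
pose B := ((N * d).+1 ^ k).+1; pose T := (N * B * d).+1.
have P_le i : {in msupp (P i), forall m, mdeg m <= d}%N.
  move=> m /msize_mdeg_lt/ltnW/leq_trans; apply.
  exact: (leq_bigmax_cond (F := fun i => msize (P i))).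
pose mA (a : {ffun 'I_N -> 'I_B}) : 'X_{1..N} := [multinom (a i : nat) | i < N].
have mA_inj : injective mA.
  by move=> a1 a2 /mnmP eq_a; apply/ffunP => i; apply/val_inj; have := eq_a i; rewrite !mnmE.
pose lq := [tuple P i | i < N].
pose Q a := 'X_[mA a] \mPo lq.
have QE a : Q a = \prod_i P i ^+ a i.
  by rewrite /Q comp_mpolyX; apply: eq_bigr => i _; rewrite tnth_mktuple mnmE.
(* [B] is chosen so that the [B ^ N] products [Q a] outnumber the monomials
   with all exponents below [T]. *)
have card_lt : (T ^ k < #|{ffun 'I_N -> 'I_B}|)%N.
  rewrite card_ffun !card_ord; apply: (@leq_ltn_trans ((B * (N * d).+1) ^ k)).
    case: (k) => [|k']; rewrite ?expn0 // leq_exp2r // /T.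
    by have : (0 < B)%N by []; move: (B) => b; nia.
  rewrite expnMn (@leq_trans (B ^ k * B)) ?ltn_pmul2l ?expn_gt0 //.
  by rewrite -expnSr leq_pexp2l.
have Q_lt a m j : m \in msupp (Q a) -> (m j < T)%N.
  rewrite QE => /(mdeg_msupp_prodX P_le) le_m.
  rewrite ltnS (leq_trans (mnm_le_mdeg m j)) // (leq_trans le_m) // -mulnA.
  rewrite -[N in (_ <= N * _)%N]card_ord -sum_nat_const leq_sum // => i _.
  by rewrite leq_mul2r ltnW ?orbT.
have [c [a0 c_a0] cQ] := mpoly_lin_dep card_lt Q_lt.
pose G := \sum_a c a *: 'X_[mA a].
exists G.
  apply: contraNneq c_a0 => G0; have := congr1 (mcoeff (mA a0)) G0.
  rewrite mcoeff0 raddf_sum (bigD1 a0) //= mcoeffZ mcoeffX eqxx mulr1 big1 ?addr0 => [->//|a ne_a].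
  by rewrite mcoeffZ mcoeffX (inj_eq mA_inj) (negbTE ne_a) mulr0.
move=> x; have -> : G.@[fun i => (P i).@[x]] = (G \mPo lq).@[x].
  by rewrite comp_mpoly_meval; apply: meval_eq => i; rewrite tnth_mktuple.
suff -> : G \mPo lq = 0 by rewrite meval0.
by rewrite -cQ raddf_sum; apply: eq_bigr => a _; apply: comp_mpolyZ.
Qed.

End AlgebraicDependence.

Section Apolarity.
Variable C : fieldType.

Definition mfact n (m : 'X_{1..n}) := (\prod_i (m i)`!)%N.

Lemma uniq_deg_monomials n d : uniq (deg_monomials n d).
Proof. by rewrite map_inj_uniq ?enum_uniq //; exact: val_inj. Qed.

Lemma mem_deg_monomials n d m : (m \in deg_monomials n d) = (mdeg m == d).
Proof.
apply/mapP/idP => [[bm] |/eqP mdeg_m]; first by rewrite mem_enum inE => mdeg_bm ->.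
have lt_m : (mdeg m < d.+1)%N by rewrite mdeg_m.
by exists (BMultinom lt_m); rewrite // mem_enum inE /= mdeg_m.
Qed.

Lemma mdeg_nth_deg_monomials n d (i : 'I_(size (deg_monomials n d))) :
  mdeg (nth 0%MM (deg_monomials n d) i) = d.
Proof. by apply/eqP; rewrite -mem_deg_monomials mem_nth. Qed.

Lemma size_deg_monomials n d : size (deg_monomials n.+1 d) = 'C(d + n, d).
Proof.
rewrite -(size_basis n d); apply/perm_size/uniq_perm; rewrite ?uniq_deg_monomials ?uniq_basis //.
by move=> m; rewrite mem_deg_monomials basis_cover.
Qed.

Lemma mcoeff0_diff_act n (D F : {mpoly C[n]}) :
  (diff_act D F)@_0 = \sum_(m <- msupp D) D@_m * (F@_m *+ mfact m).
Proof.
rewrite /diff_act raddf_sum; apply: eq_bigr => m _.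
rewrite /= mcoeffZ mcoeff_mderivm addm0 /mfact; congr (_ * (_ *+ _)).
by apply: eq_bigr => i _; rewrite ffactnn.
Qed.

Lemma big_msupp_sub n (p : {mpoly C[n]}) (s : seq 'X_{1..n}) (g : 'X_{1..n} -> C) :
  uniq s -> {subset msupp p <= s} ->
  \sum_(m <- msupp p) p@_m * g m = \sum_(m <- s) p@_m * g m.
Proof.
move=> uniq_s sub_ps; rewrite [RHS](bigID (mem (msupp p))) /= [X in _ + X]big1 ?addr0.
  rewrite -[RHS]big_filter; apply: perm_big.
  apply: uniq_perm; rewrite ?filter_uniq ?msupp_uniq // => m.
  by rewrite mem_filter andb_idr // => /sub_ps.
by move=> m /memN_msupp_eq0 ->; rewrite mul0r.
Qed.

(* The apolarity lemma: since [I(X)_d] is the annihilator of the [d]-th powers of the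
   linear forms of [X], a form [F] apolar to [X] is a combination of these powers. *)
Lemma apolar_powers_span n d (I : finType) (pt : I -> 'I_n -> C) (X : ('I_n -> C) -> Prop)
    (F : {mpoly C[n]}) :
  (forall v, X v <-> exists i, v = pt i) -> apolar X F ->
  exists a : I -> C, forall m, mdeg m = d ->
    F@_m *+ mfact m = \sum_i a i * \prod_j pt i j ^+ m j.
Proof.
move=> X_pt apolar_F; set ms := deg_monomials n d; pose N := size ms.
pose mon (k : 'I_N) := nth 0%MM ms k.
pose M := \matrix_(x < #|I|, k < N) \prod_j pt (enum_val x) j ^+ mon k j.
pose u : 'rV[C]_N := \row_k (F@_(mon k) *+ mfact (mon k)).
suff /submxP[a ua] : (u <= M)%MS.
  exists (fun i => a 0 (enum_rank i)) => m /eqP; rewrite -mem_deg_monomials => m_ms.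
  have lt_m : (index m ms < N)%N by rewrite index_mem.
  have := congr1 (fun w : 'rV_N => w 0 (Ordinal lt_m)) ua; rewrite !mxE /mon nth_index // => ->.
  rewrite (reindex (fun x : 'I_#|I| => enum_val x)) /=; last exact/onW_bij/enum_val_bij.
  by apply: eq_bigr => x _; rewrite enum_valK mxE /mon nth_index.
rewrite submxE; apply/eqP/rowP => k; rewrite !mxE.
pose D := \sum_(l < N) cokermx M l k *: 'X_[mon l].
have D_homog : D \is d.-homog.
  apply/rpred_sum => l _; apply/rpredZ; rewrite dhomogX.
  by rewrite -mem_deg_monomials mem_nth.
have mcoeff_D l : D@_(mon l) = cokermx M l k.
  rewrite raddf_sum (bigD1 l) //= mcoeffZ mcoeffX eqxx mulr1 big1 ?addr0 // => l' ne_l'.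
  rewrite /= mcoeffZ mcoeffX /mon nth_uniq ?uniq_deg_monomials //.
  by rewrite (inj_eq val_inj) (negbTE ne_l') mulr0.
have D_van : vanishing_ideal X D.
  move=> e v /X_pt[i ->]; have [<-|ne_de] := eqVneq d e; last first.
    by rewrite (pihomog_ne0 ne_de D_homog) meval0.
  have := congr1 (fun A : 'M_(#|I|, N) => A (enum_rank i) k) (mulmx_coker M).
  rewrite pihomog_dE // !mxE => <-; rewrite raddf_sum; apply: eq_bigr => l _.
  by rewrite /= mevalZ mevalX [M _ _]mxE enum_rankK mulrC.
have := congr1 (mcoeff 0%MM) (apolar_F D D_van).
rewrite mcoeff0 mcoeff0_diff_act (big_msupp_sub _ (uniq_deg_monomials n d)); last first.
  by move=> m m_D; rewrite mem_deg_monomials (dhomog_mf D_homog m_D).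
rewrite (big_nth 0%MM) big_mkord => uk0.
rewrite -[RHS]uk0; apply: eq_bigr => l _.
by rewrite mxE -/(mon l) mcoeff_D mulrC.
Qed.

End Apolarity.

Section CrossVector.
Variable R : comPzRingType.

Definition border n (A : 'M[R]_(n, n.+1)) (y : 'I_n.+1 -> R) : 'M[R]_n.+1 :=
  \matrix_(t, c) if unlift ord_max t is Some t' then A t' c else y c.

Definition cross_vec n (A : 'M[R]_(n, n.+1)) (c : 'I_n.+1) : R :=
  cofactor (border A (fun _ => 0)) ord_max c.

Lemma cofactor_border n (A : 'M[R]_(n, n.+1)) y c :
  cofactor (border A y) ord_max c = cross_vec A c.
Proof.
by rewrite /cross_vec /cofactor; congr (_ * \det _); apply/matrixP => t c'; rewrite !mxE liftK.
Qed.

Lemma det_border n (A : 'M[R]_(n, n.+1)) y :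
  \det (border A y) = \sum_c y c * cross_vec A c.
Proof.
rewrite (expand_det_row _ ord_max); apply: eq_bigr => c _.
by rewrite mxE unlift_none cofactor_border.
Qed.

Lemma cross_vec_orthogonal n (A : 'M[R]_(n, n.+1)) t :
  \sum_c A t c * cross_vec A c = 0.
Proof.
rewrite -det_border (@determinant_alternate _ _ _ (lift ord_max t) ord_max) //.
  by rewrite eq_sym neq_lift.
by move=> c; rewrite !mxE liftK unlift_none.
Qed.

End CrossVector.

Lemma cross_vec_map (R S : comPzRingType) (f : {rmorphism R -> S}) n (A : 'M[R]_(n, n.+1)) c :
  f (cross_vec A c) = cross_vec (map_mx f A) c.
Proof.
rewrite /cross_vec -cofactor_map_mx; congr (cofactor _ _ _); apply/matrixP => t c'.
by rewrite !mxE; case: (unlift _ _) => [t'|]; rewrite ?mxE ?rmorph0.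
Qed.

Lemma cross_vec_kernel (F : fieldType) n (A : 'M[F]_(n, n.+1)) y (p : 'I_n.+1 -> F) :
  border A y \in unitmx -> (forall t, \sum_c A t c * p c = 0) ->
  exists lam, forall c, p c = lam * cross_vec A c.
Proof.
move=> unit_B Ap0; set B := border A y.
pose lam := (\sum_c y c * p c) / \det B; exists lam => c.
have det_B : \det B != 0 by rewrite -unitfE -unitmxE.
suff : \col_c p c = B^-1 *m (B *m (lam *: \col_c cross_vec A c)).
  by rewrite mulKmx // => /colP/(_ c); rewrite !mxE.
apply: (canRL (mulKmx unit_B)); apply/colP => t; rewrite -scalemxAr !mxE.
under eq_bigr do rewrite !mxE.
under [in RHS]eq_bigr do rewrite !mxE.
case: (unliftP ord_max t) => [t' _|_].
  by rewrite Ap0 cross_vec_orthogonal mulr0.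
by rewrite -det_border mulfVK.
Qed.

Definition nsubset r n := {S : {set 'I_r} | #|S| == n}.

Lemma card_nsubset r n : #|{: nsubset r n}| = 'C(r, n).
Proof.
rewrite card_sig -[r in 'C(r, _)](card_ord r) -card_draws.
by apply: eq_card => S; rewrite !inE.
Qed.

Section StarPoints.
Variables (R : comPzRingType) (r n : nat) (x0 : 'I_r).

(* The rows of [S], listed increasingly; [x0] is only a default index. *)
Definition star_rows (S : {set 'I_r}) (t : 'I_n) : 'I_r := nth x0 (enum S) t.

Definition star_point (L : 'M[R]_(r, n.+1)) (S : {set 'I_r}) : 'I_n.+1 -> R :=
  cross_vec (rowsub (star_rows S) L).

Lemma star_rows_mem (S : {set 'I_r}) (t : 'I_n) : #|S| = n -> star_rows S t \in S.
Proof. by move=> card_S; rewrite -mem_enum mem_nth // -cardE card_S. Qed.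

Lemma star_rows_inj (S : {set 'I_r}) : #|S| = n -> injective (star_rows S).
Proof.
move=> card_S t1 t2 /eqP; rewrite nth_uniq ?enum_uniq // -?cardE ?card_S //.
by move/eqP/val_inj.
Qed.

End StarPoints.

Lemma star_point_map (R S : comPzRingType) (f : {rmorphism R -> S}) r n (x0 : 'I_r)
    (L : 'M[R]_(r, n.+1)) T c :
  f (star_point x0 L T c) = star_point x0 (map_mx f L) T c.
Proof.
by rewrite /star_point cross_vec_map; congr cross_vec; apply/matrixP => t j; rewrite !mxE.
Qed.

Section StarConfiguration.
Variables (C : fieldType) (r n : nat) (x0 : 'I_r) (L : 'M[C]_(r, n.+1)).
Hypotheses (le_nr : (n.+1 <= r)%N)
  (L_free : forall f : 'I_n.+1 -> 'I_r, injective f -> row_free (rowsub f L)).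

Lemma star_point_spec (S : {set 'I_r}) (p : 'I_n.+1 -> C) : #|S| = n ->
  (forall i, i \in S -> \sum_j L i j * p j = 0) ->
  exists lam, forall c, p c = lam * star_point x0 L S c.
Proof.
move=> card_S p_orth.
have [i0 i0_S] : exists i0, i0 \notin S.
  apply/existsP; rewrite -negb_forall; apply: contraTN le_nr => /forallP S_full.
  rewrite -ltnNge ltnS -card_S -[X in (X <= _)%N](card_ord r).
  by apply/subset_leq_card/subsetP => i _; apply: S_full.
pose f (t : 'I_n.+1) := if unlift ord_max t is Some t' then star_rows x0 S t' else i0.
apply: (@cross_vec_kernel _ _ _ (L i0)) => [|t]; last first.
  by under eq_bigr do rewrite mxE; apply/p_orth/star_rows_mem.
have -> : border (rowsub (star_rows x0 S) L) (L i0) = rowsub f L.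
  by apply/matrixP => t c; rewrite !mxE /f; case: (unlift _ _) => [t'|]; rewrite ?mxE.
rewrite -row_free_unit; apply: L_free => t1 t2; rewrite /f.
case: (unliftP ord_max t1) => [t1' ->|->]; case: (unliftP ord_max t2) => [t2' ->|->] //.
- by move/(star_rows_inj card_S) ->.
- by move=> eq_i0; have := star_rows_mem x0 t1' card_S; rewrite eq_i0 (negbTE i0_S).
- by move=> eq_i0; have := star_rows_mem x0 t2' card_S; rewrite -eq_i0 (negbTE i0_S).
Qed.

(* Rescaling each point to the cross vector of its hyperplanes multiplies the
   coefficient of its [d]-th power by the [d]-th power of the scalar. *)
Lemma apolar_star_span (pt : {set 'I_r} -> 'I_n.+1 -> C) (X : ('I_n.+1 -> C) -> Prop)
    (F : {mpoly C[n.+1]}) d :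
  (forall S : {set 'I_r}, #|S| = n -> forall i, i \in S -> \sum_j L i j * pt S j = 0) ->
  (forall v, X v <-> exists2 S : {set 'I_r}, #|S| = n & v = pt S) ->
  apolar X F ->
  exists a : nsubset r n -> C, forall m, mdeg m = d ->
    F@_m *+ mfact m = \sum_S a S * \prod_j star_point x0 L (val S) j ^+ m j.
Proof.
move=> pt_orth X_pt apolar_F.
have X_pt' v : X v <-> exists S : nsubset r n, v = pt (val S).
  rewrite X_pt; split=> [[S /eqP card_S ->]|[[S /= /eqP card_S] ->]]; last by exists S.
  by exists (exist _ S card_S).
have [b b_spec] := apolar_powers_span d X_pt' apolar_F.
have lam_ex (S : nsubset r n) :
    exists lam, forall c, pt (val S) c = lam * star_point x0 L (val S) c.
  by case: S => S /= /eqP card_S; apply: star_point_spec card_S (pt_orth S card_S).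
have [lam lam_spec] := fin_all_exists lam_ex.
exists (fun S => b S * lam S ^+ d) => m mdeg_m; rewrite b_spec //.
apply: eq_bigr => S _; rewrite -mulrA; congr (_ * _).
under eq_bigr do rewrite lam_spec exprMn.
by rewrite big_split /= prodrXr -mdegE mdeg_m.
Qed.

End StarConfiguration.

Lemma bin_addC a b : 'C(a + b, a) = 'C(a + b, b).
Proof. by rewrite -[RHS]bin_sub ?leq_addl // addnK. Qed.

Lemma linear_le_bin m d : (5 <= m)%N -> (3 <= d)%N -> ((d + m) * (m + 2) <= 'C(d + m, d))%N.
Proof.
move=> le5m; elim: d => // d IHd; rewrite leq_eqVlt => /orP[/eqP <- | lt2d].
  change (m.+3 * (m + 2) <= 'C(m.+3, 3))%N.
  have bin3 : ('C(m.+3, 3) * 6 = m.+3 * m.+2 * m.+1)%N.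
    by rewrite (bin_ffact _ 3) !ffactnS ffactn0 muln1 mulnA.
  by rewrite -(@leq_pmul2r 6) // bin3; nia.
have le_m_bin : (m + 2 <= 'C(d + m, d.+1))%N.
  have -> : (d + m = d.+1 + m.-1)%N by lia.
  rewrite bin_addC (@leq_trans 'C(2 + m.-1, m.-1)) ?leq_bin2l ?leq_add2r //; last by lia.
  rewrite -bin_addC bin2 (_ : 2 + m.-1 = m.+1)%N /=; last by lia.
  have : ((m.+1 * m)./2.*2 = m.+1 * m)%N.
    by rewrite -[RHS]odd_double_half oddM /= andNb add0n.
  nia.
rewrite addSn binS; have := IHd lt2d; nia.
Qed.

Lemma star_count_lt d n r : (3 <= d)%N -> (6 <= n)%N -> (r < d + n)%N ->
  ((r * n.+1).-1 + 'C(r, n) < 'C(d + n, d))%N.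
Proof.
case: n => // m le3d le6m lt_r; have le_r : (r <= d + m)%N by rewrite -ltnS -addnS.
rewrite bin_addC addnS binS -bin_addC.
have := linear_le_bin le6m le3d; have := leq_bin2l m.+1 le_r; nia.
Qed.

(* The [y] are the values of a polynomial map in the entries of [L] other than
   [L i0 j0] and in the [a S], which are fewer than the coordinates of [y]. *)
Lemma star_chart_relation (C : numFieldType) d n r (i0 : 'I_r) (j0 : 'I_n.+1) :
  ((r * n.+1).-1 + 'C(r, n) < size (deg_monomials n.+1 d))%N ->
  exists2 G : {mpoly C[size (deg_monomials n.+1 d)]}, G != 0 &
  forall (L : 'M[C]_(r, n.+1)) (a : nsubset r n -> C)
         (y : 'I_(size (deg_monomials n.+1 d)) -> C),
    L i0 j0 = 1 ->
    (forall i : 'I_(size (deg_monomials n.+1 d)),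
       let m := nth 0%MM (deg_monomials n.+1 d) i in
       y i *+ mfact m = \sum_S a S * \prod_j star_point i0 L (val S) j ^+ m j) ->
    G.@[y] = 0.
Proof.
set N := size _ => count; pose mon (i : 'I_N) := nth 0%MM (deg_monomials n.+1 d) i.
pose param := ({e : 'I_r * 'I_n.+1 | e != (i0, j0)} + nsubset r n)%type.
have card_param : #|{: param}| = ((r * n.+1).-1 + 'C(r, n))%N.
  by rewrite card_sum card_sig cardC1 card_prod !card_ord card_nsubset.
pose var (v : param) : {mpoly C[#|{: param}|]} := 'X_(enum_rank v).
pose Lvar : 'M_(r, n.+1) :=
  \matrix_(i, j) if insub (i, j) is Some e then var (inl e) else 1.
pose P i := (mfact (mon i))%:R^-1 *:
  \sum_S var (inr S) * \prod_j star_point i0 Lvar (val S) j ^+ mon i j.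
have [G G_neq0 GP] : exists2 G : {mpoly C[N]}, G != 0 & forall x, G.@[fun i => (P i).@[x]] = 0.
  by apply: mpoly_alg_dep; rewrite card_param.
exists G => // L a y L_i0j0 y_spec.
pose x (k : 'I_#|{: param}|) :=
  match (enum_val k : param) with inl e => L (val e).1 (val e).2 | inr T => a T end.
have x_var v : (var v).@[x] = match v with inl e => L (val e).1 (val e).2 | inr T => a T end.
  by rewrite mevalXU /x enum_rankK.
have Lvar_x : map_mx (meval x) Lvar = L.
  apply/matrixP => i j; rewrite !mxE; case: insubP => [e _ e_ij|].
    by rewrite x_var e_ij.
  by rewrite negbK => /eqP[-> ->]; rewrite meval1 L_i0j0.
rewrite -(GP x); apply: meval_eq => i.
have mfact_neq0 : (mfact (mon i))%:R != 0 :> C.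
  by rewrite pnatr_eq0 -lt0n prodn_gt0 // => j; rewrite fact_gt0.
apply: (mulfI mfact_neq0); rewrite mulr_natl y_spec /P mevalZ mulrA mulfV // mul1r.
rewrite raddf_sum; apply: eq_bigr => S _ /=.
rewrite mevalM x_var rmorph_prod; congr (_ * _); apply: eq_bigr => j _.
by rewrite rmorphXn /= star_point_map Lvar_x.
Qed.

Lemma star_matrix_neq0 (C : fieldType) r n (L : 'M[C]_(r, n.+1)) : (n.+1 <= r)%N ->
  (forall f : 'I_n.+1 -> 'I_r, injective f -> row_free (rowsub f L)) ->
  exists i j, L i j != 0.
Proof.
move=> le_nr L_free.
have [[i j] /= Lij | L0] := pickP (fun e : 'I_r * 'I_n.+1 => L e.1 e.2 != 0); first by exists i, j.
have widen_inj : injective (widen_ord le_nr) by move=> t1 t2 /(congr1 val) /= /val_inj.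
suff L'0 : rowsub (widen_ord le_nr) L = 0.
  by have := L_free _ widen_inj; rewrite L'0 /row_free mxrank0.
by apply/matrixP => t c; rewrite !mxE; apply/eqP/negbFE/(L0 (_, _)).
Qed.

Lemma star_matrix_scale (C : fieldType) r n (L : 'M[C]_(r, n.+1)) c : c != 0 ->
  (forall f : 'I_n.+1 -> 'I_r, injective f -> row_free (rowsub f L)) ->
  (forall f : 'I_n.+1 -> 'I_r, injective f -> row_free (rowsub f (c *: L))).
Proof.
move=> c_neq0 L_free f f_inj.
have -> : rowsub f (c *: L) = c *: rowsub f L by apply/matrixP => t j; rewrite !mxE.
by rewrite /row_free (eqmx_scale _ c_neq0); apply: L_free.
Qed.

Lemma general_form_no_apolar_star (C : numFieldType) d n r :
  ((r * n.+1).-1 + 'C(r, n) < 'C(d + n, d))%N ->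
  general_form n d (fun F : {mpoly C[n.+1]} => ~ has_apolar_star n r F).
Proof.
rewrite -size_deg_monomials => count.
have [G G_neq0 G_spec] :=
  fin_all_exists2 (fun e : 'I_r * 'I_n.+1 => star_chart_relation C e.1 e.2 count).
exists (\prod_e G e); split; first exact/prodf_neq0.
move=> F F_homog; apply: contraNnot => -[X [[L [le_nr [L_free [pt [pt_spec X_pt]]]]] apolar_F]].
have [i0 [j0 L_neq0]] := star_matrix_neq0 le_nr L_free.
pose L' := (L i0 j0)^-1 *: L.
have L'_free := star_matrix_scale (invr_neq0 L_neq0) L_free.
have pt_orth (S : {set 'I_r}) : #|S| = n -> forall i, i \in S -> \sum_j L' i j * pt S j = 0.
  move=> card_S i i_S; under eq_bigr do rewrite mxE -mulrA.
  by rewrite -mulr_sumr (pt_spec S card_S).2 ?mulr0.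
have [a a_spec] := apolar_star_span i0 le_nr L'_free d pt_orth X_pt apolar_F.
rewrite rmorph_prod /= prodf_seq_eq0; apply/hasP; exists (i0, j0); first exact: mem_index_enum.
apply/eqP/(G_spec (i0, j0) L' a) => [|i]; first by rewrite mxE mulVf.
exact/a_spec/mdeg_nth_deg_monomials.
Qed.

Definition nodal_poly (R : nzRingType) r (a : 'I_r -> R) (S : {set 'I_r}) : {poly R} :=
  \prod_(i in S) ('X - (a i)%:P).

Section StarHilbertFunction.
Variables (C : numClosedFieldType) (n r e : nat) (a : 'I_r -> C) (Q : {mpoly C[n.+1]}).
Hypotheses (a_inj : injective a) (Q_homog : Q \is e.-homog) (le_enr : (e + n <= r)%N).
Hypothesis Q_nodal : forall S : {set 'I_r}, #|S| = n -> Q.@[fun j => (nodal_poly a S)`_j] = 0.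

Let Q_roots (x : 'I_n -> C) := Q.@[fun j => (\prod_k ('X - (x k)%:P))`_j].

Let Q_roots_line (x : 'I_n -> C) (k : 'I_n) : exists2 lp : {poly C}, (size lp <= e.+1)%N &
  forall t, Q_roots (fun j => if j == k then t else x j) = lp.[t].
Proof.
have size_Q : (msize Q <= e.+1)%N.
  by rewrite msizeE; apply/bigmax_leqP_seq => m m_Q _; rewrite (dhomog_mf Q_homog m_Q).
pose h := \prod_(j | j != k) ('X - (x j)%:P).
have [lp size_lp lpE] := meval_line_poly (fun j => ('X * h)`_j) (fun j => - h`_j) size_Q.
exists lp => // t; rewrite lpE /Q_roots; apply: meval_eq => j.
rewrite (bigD1 k) //= eqxx (eq_bigr (fun j => 'X - (x j)%:P)) => [|j' /negbTE -> //].
by rewrite -/h mulrBl coefB coefCM mulNr [_ * t]mulrC.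
Qed.

Let Q_roots_distinct (x : 'I_n -> C) (s : 'I_n -> 'I_r) :
  (forall j, x j = a (s j)) -> injective s -> Q_roots x = 0.
Proof.
move=> x_s s_inj; rewrite /Q_roots -[RHS](Q_nodal (S := [set s j | j in [set: 'I_n]])); last first.
  by rewrite card_imset // cardsT card_ord.
apply: meval_eq => j; rewrite /nodal_poly big_imset /=; last by move=> ? ? _ _ /s_inj.
rewrite [in RHS](eq_bigl xpredT) => [|i]; last by rewrite inE.
by under eq_bigr do rewrite x_s.
Qed.

(* Freeing the coordinates of [x] one at a time: in each, [Q_roots] is a polynomial of
   degree at most [e] vanishing at the [r - n + 1 > e] values of [a] not yet used. *)
Let Q_roots_partly_distinct k : (k <= n)%N -> forall (x : 'I_n -> C) (s : 'I_n -> 'I_r),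
  (forall j : 'I_n, (k <= j)%N -> x j = a (s j)) ->
  {in [pred j : 'I_n | k <= j]%N &, injective s} -> Q_roots x = 0.
Proof.
elim: k => [_ x s x_s s_inj|k IHk lt_kn x s x_s s_inj].
  by apply: (Q_roots_distinct (s := s)) => [j|j1 j2]; [exact: x_s | exact: s_inj].
pose kk := Ordinal lt_kn; pose used := [set s j | j in [set j : 'I_n | k < j]%N].
have card_used : (#|used| <= n.-1)%N.
  rewrite (leq_trans (leq_imset_card _ _)) // -[n in (_ <= n.-1)%N](card_ord n) -(cardsC1 kk).
  by apply/subset_leq_card/subsetP => j; rewrite !inE; apply: contraTneq => ->; rewrite ltnn.
have [lp size_lp lpE] := Q_roots_line x kk.
have lp0 : lp = 0.
  apply: (@poly_roots_eq0 _ _ [seq a i | i <- enum (~: used)]).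
  - by rewrite map_inj_uniq ?enum_uniq.
  - apply/allP => z; case/mapP => i; rewrite mem_enum => i_unused ->.
    pose s' (j : 'I_n) := if j == kk then i else s j.
    have gt_k (j : 'I_n) : (k <= j)%N -> j != kk -> (k < j)%N.
      move=> le_kj ne_j; rewrite ltn_neqAle le_kj andbT.
      by apply: contra_neq ne_j => eq_kj; apply/val_inj; rewrite /= -eq_kj.
    rewrite /root -lpE; apply/eqP/(IHk (ltnW lt_kn) _ s') => [j le_kj|j1 j2].
      by rewrite /s'; case: eqP => // /eqP ne_j; apply/x_s/gt_k.
    rewrite !inE /s' => le_kj1 le_kj2.
    have unused (j : 'I_n) : (k <= j)%N -> j != kk -> i != s j.
      move=> le_kj ne_j; move: i_unused; rewrite inE; apply: contraNneq => ->.
      by rewrite imset_f // inE gt_k.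
    case: (eqVneq j1 kk) => [->|ne1]; case: (eqVneq j2 kk) => [->|ne2] //.
    + by move/eqP; rewrite (negbTE (unused _ le_kj2 ne2)).
    + by move/eqP; rewrite eq_sym (negbTE (unused _ le_kj1 ne1)).
    + by apply: s_inj; rewrite inE gt_k.
  - rewrite size_map -cardE (leq_trans size_lp) //.
    have := cardsC used; rewrite card_ord; move: card_used; lia.
have := lpE (x kk); rewrite lp0 horner0 => <-; apply: meval_eq => j.
by rewrite [in RHS](eq_bigr (fun k => 'X - (x k)%:P)) // => k' _; case: eqP => [->|].
Qed.

Let Q_roots_eq0 x : Q_roots x = 0.
Proof.
have le_nr : (n <= r)%N by apply: leq_trans (leq_addl e n) le_enr.
apply: (Q_roots_partly_distinct (leqnn n) (s := widen_ord le_nr)) => [j|j1 j2].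
  by rewrite leqNgt ltn_ord.
by rewrite inE leqNgt ltn_ord.
Qed.

(* Every monic polynomial of degree [n] splits, so [Q] vanishes wherever the last
   coordinate is nonzero. *)
Lemma star_vanishing_form_eq0 : Q = 0.
Proof.
have Q_eq0 (v : 'I_n.+1 -> C) : v ord_max != 0 -> Q.@[v] = 0.
  move=> v_neq0; pose p := \poly_(j < n.+1) (v (inord j) / v ord_max).
  have inord_max : (inord n : 'I_n.+1) = ord_max by apply/val_inj; rewrite /= inordK.
  have size_p : size p = n.+1 by rewrite size_poly_eq //= inord_max divff ?oner_eq0.
  have [rs p_rs] := closed_field_poly_normal p.
  rewrite (_ : lead_coef p = 1) ?scale1r in p_rs; last first.
    by rewrite lead_coefE size_p coef_poly ltnSn inord_max divff.
  have size_rs : size rs = n.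
    by have := congr1 (fun q : {poly C} => size q) p_rs; rewrite size_prod_XsubC size_p => -[].
  have prod_rs : \prod_(k < n) ('X - (rs`_k)%:P) = p by rewrite p_rs (big_nth 0) size_rs big_mkord.
  have := Q_roots_eq0 (fun k => rs`_k); rewrite /Q_roots prod_rs => Qp.
  have -> : Q.@[v] = Q.@[fun j => v ord_max * (v j / v ord_max)].
    by apply: meval_eq => j; rewrite mulrC divfK.
  rewrite (meval_homog_scale _ _ Q_homog) -[RHS](mulr0 (v ord_max ^+ e)) -Qp; congr (_ * _).
  by apply: meval_eq => j; rewrite coef_poly ltn_ord inord_val.
have : 'X_ord_max * Q = 0.
  apply: meval_eq0 => v; rewrite mevalM mevalXU.
  by have [->|/Q_eq0 ->] := eqVneq (v ord_max) 0; rewrite ?mul0r ?mulr0.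
move/eqP; rewrite mulf_eq0 => /orP[/eqP X0 | /eqP //].
by have := congr1 (mcoeff U_(ord_max)) X0; rewrite mcoeffX eqxx mcoeff0 => /eqP; rewrite oner_eq0.
Qed.

End StarHilbertFunction.

Lemma nodal_star_config (C : fieldType) n r (a : 'I_r -> C) : injective a -> (n.+1 <= r)%N ->
  star_config n r (fun v => exists2 S : {set 'I_r}, #|S| = n & v = fun j => (nodal_poly a S)`_j).
Proof.
move=> a_inj le_nr; exists (\matrix_(i, j) a i ^+ j); split=> //; split.
  move=> f f_inj; rewrite row_free_unit.
  have -> : rowsub f (\matrix_(i, j) a i ^+ j) = (Vandermonde n.+1 (\row_t a (f t)))^T.
    by apply/matrixP => t c; rewrite !mxE.
  rewrite unitmx_tr unitmxE det_Vandermonde unitfE.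
  apply/prodf_neq0 => i _; apply/prodf_neq0 => j lt_ij; rewrite !mxE subr_eq0.
  by apply: contraTneq lt_ij => /a_inj/f_inj ->; rewrite ltnn.
exists (fun S j => (nodal_poly a S)`_j); split=> // S card_S.
have size_S : size (nodal_poly a S) = n.+1.
  by rewrite /nodal_poly -big_enum size_prod_XsubC -cardE card_S.
split.
  exists ord_max; change ((nodal_poly a S)`_n != 0).
  have /monicP : nodal_poly a S \is monic by apply: monic_prod_XsubC.
  by rewrite lead_coefE size_S => ->; apply: oner_neq0.
move=> i i_S; have : root (nodal_poly a S) (a i).
  by rewrite /nodal_poly (bigD1 i) //= rootM root_XsubC eqxx.
rewrite /root (horner_coef_wide _ (eq_leq size_S)) => /eqP root_i.
by rewrite -[RHS]root_i; apply: eq_bigr => j _; rewrite mxE mulrC.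
Qed.

Lemma general_form_apolar_star (C : numClosedFieldType) d n r : (0 < d)%N -> (d + n <= r)%N ->
  general_form n d (fun F : {mpoly C[n.+1]} => has_apolar_star n r F).
Proof.
move=> d_gt0 le_dnr; exists 1; split=> [|F F_homog _]; first exact: oner_neq0.
pose a (i : 'I_r) : C := (i : nat)%:R.
have a_inj : injective a by move=> i j /eqP; rewrite eqr_nat => /eqP/val_inj.
eexists; split; first by apply: nodal_star_config a_inj _; lia.
move=> D D_van; apply: big1_seq => m /andP[_ m_D].
have [le_md|lt_dm] := leqP (mdeg m) d; last by rewrite (mderivm_homog_eq0 F_homog lt_dm) scaler0.
suff -> : D@_m = 0 by rewrite scale0r.
rewrite -mcoeff_pihomog (star_vanishing_form_eq0 a_inj (pihomogP _ _ _)) ?mcoeff0 //.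
  by rewrite (leq_trans _ le_dnr) // leq_add2r.
by move=> S card_S; apply: D_van; exists S.
Qed.

Unset Implicit Arguments.

Theorem theorem3p3 (R : realType) (d n r : nat) :
  (3 <= d)%N -> (6 <= n)%N ->
  ((r < d + n)%N ->
     general_form n d (fun F : {mpoly (complex R)[n.+1]} => ~ has_apolar_star n r F)) /\
  ((d + n <= r)%N ->
     general_form n d (fun F : {mpoly (complex R)[n.+1]} => has_apolar_star n r F)).
Proof.
move=> le3d le6n; split=> [lt_r | le_r].
  exact/general_form_no_apolar_star/star_count_lt.
exact: general_form_apolar_star (leq_trans _ le3d) le_r.
Qed.
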